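(* Fix a single-item interdependent-values setting and let $\mathcal M$ be a universally ex-post IC-IR mechanism that is an $\alpha$-approximation to the optimal welfare, i.e., for every signal profile $\mathbf s$ the expected welfare of $\mathcal M$ when all bidders bid truthfully ($\mathbf b=\mathbf s$) is at least $\mathrm{OPT}(\mathbf s)/\alpha$. For $\epsilon\in(0,1)$ let $\mathcal M'$ be the randomized mechanism that runs $\mathcal M$ with probability $1-\epsilon$ and the proportional allocation mechanism with probability $\epsilon$. Then the price of anarchy of $\mathcal M'$ with respect to pure Nash equilibria under no-overbidding is at most $\frac{\alpha}{1-\epsilon}$: for every signal profile $\mathbf s$ and every pure Nash equilibrium $\mathbf b$ of $\mathcal M'$ at $\mathbf s$ under no-overbidding, $\mathrm{OPT}(\mathbf s)\le\frac{\alpha}{1-\epsilon}\,\mathbb E[\mathrm{SW}_{\mathcal M'}(\mathbf b,\mathbf s)]$.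
   Context: Single-item interdependent-values setting: bidders $i\in[n]$ have private signals $s_i\in S_i\subseteq\mathbb R_{\ge0}$ (intervals) and publicly known valuations $v_i:S_1\times\dots\times S_n\to\mathbb R_{\ge0}$, weakly increasing in every coordinate and strictly increasing in $s_i$. A deterministic mechanism $(x,p)$ solicits bids $b_i\in S_i$, outputs $x_i(\mathbf b)\in\{0,1\}$ with $\sum_ix_i\le1$ and payments $p_i(\mathbf b)$; utility $u_i(\mathbf b;\mathbf s)=x_i(\mathbf b)v_i(\mathbf s)-p_i(\mathbf b)$. Ex-post IC-IR: for every $\mathbf s$, $i$, $b_i\in S_i$: $x_i(\mathbf s)v_i(\mathbf s)-p_i(\mathbf s)\ge\max\{x_i(b_i,\mathbf s_{-i})v_i(\mathbf s)-p_i(b_i,\mathbf s_{-i}),0\}$. Universally ex-post IC-IR: a probability distribution over deterministic ex-post IC-IR mechanisms. Proportional allocation mechanism: given $\mathbf b$, allocates the item to bidder $i$ with probability $\frac{b_i}{\sum_jb_j+1}$ and charges no payments. $\mathrm{OPT}(\mathbf s)=\max_iv_i(\mathbf s)$; $\mathrm{SW}_{\mathcal M'}(\mathbf b,\mathbf s)=\sum_ix_i(\mathbf b)v_i(\mathbf s)$ (random). A pure Nash equilibrium at $\mathbf s$ under no-overbidding is a bid profile $\mathbf b\le\mathbf s$ such that for every $i$ and every $b_i'\in S_i$ with $b_i'\le s_i$, $\mathbb E[u_i((b_i',\mathbf b_{-i});\mathbf s)]\le\mathbb E[u_i(\mathbf b;\mathbf s)]$ (expectations over the mechanism's randomness). 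*)

From HB Require Import structures.
From mathcomp Require Import all_boot all_order all_algebra.
From mathcomp Require Import all_classical all_reals all_analysis.
Set Implicit Arguments. Unset Strict Implicit. Unset Printing Implicit Defensive.
Import Order.TTheory GRing.Theory Num.Theory.
Local Open Scope ring_scope.

Definition signal_spaces (n : nat) (R : realType) (S : 'I_n -> interval R) :=
  forall i x, x \in S i -> 0 <= x.

Definition in_prof (n : nat) (R : realType) (S : 'I_n -> interval R)
  (b : 'I_n -> R) := forall i, b i \in S i.

Definition upd (n : nat) (R : realType) (b : 'I_n -> R) (i : 'I_n) (t : R) :
  'I_n -> R := fun j => if j == i then t else b j.

Definition valuations (n : nat) (R : realType) (S : 'I_n -> interval R)
  (v : 'I_n -> ('I_n -> R) -> R) :=
  [/\ (forall i s, in_prof S s -> 0 <= v i s),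
      (forall i j s t, in_prof S s -> t \in S j -> s j <= t ->
          v i s <= v i (upd s j t)) &
      (forall i s t, in_prof S s -> t \in S i -> s i < t ->
          v i s < v i (upd s i t))].

(* Deterministic mechanism: winner (None = no allocation, so x_i in {0,1}
   and sum_i x_i <= 1) and payments. *)
Record dmech (n : nat) (R : realType) := DMech {
  winner : ('I_n -> R) -> option 'I_n;
  pay : 'I_n -> ('I_n -> R) -> R }.

Definition alloc (n : nat) (R : realType) (M : dmech n R) (i : 'I_n)
  (b : 'I_n -> R) : R := if winner M b == Some i then 1 else 0.

Definition util (n : nat) (R : realType) (v : 'I_n -> ('I_n -> R) -> R)
  (M : dmech n R) (i : 'I_n) (b s : 'I_n -> R) : R :=
  alloc M i b * v i s - pay M i b.

Definition expost_ICIR (n : nat) (R : realType) (S : 'I_n -> interval R)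
  (v : 'I_n -> ('I_n -> R) -> R) (M : dmech n R) :=
  forall s, in_prof S s -> forall i t, t \in S i ->
    Num.max (util v M i (upd s i t) s) 0 <= util v M i s s.

(* Universally ex-post IC-IR: a probability distribution P on a measurable
   space Omega of deterministic ex-post IC-IR mechanisms M w (with the
   measurability / integrability needed for expectations to exist). *)
Definition universal_ICIR (n : nat) (R : realType) (d : measure_display)
  (Omega : measurableType d) (P : probability Omega R)
  (S : 'I_n -> interval R) (v : 'I_n -> ('I_n -> R) -> R)
  (M : Omega -> dmech n R) :=
  [/\ (forall w, expost_ICIR S v (M w)),
      (forall i b, in_prof S b ->
          measurable_fun setT (fun w => alloc (M w) i b)) &
      (forall i b, in_prof S b ->
          P.-integrable setT (fun w => (pay (M w) i b)%:E))].

Definition OPT (n : nat) (R : realType) (v : 'I_n -> ('I_n -> R) -> R)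
  (s : 'I_n -> R) : R := \big[Num.max/0]_(i < n) v i s.

Definition ESW (n : nat) (R : realType) (d : measure_display)
  (Omega : measurableType d) (P : probability Omega R)
  (v : 'I_n -> ('I_n -> R) -> R) (M : Omega -> dmech n R)
  (b s : 'I_n -> R) : R :=
  Rintegral P setT (fun w => \sum_(i < n) alloc (M w) i b * v i s).

(* Proportional allocation: probability b_i / (sum_j b_j + 1), no payments *)
Definition pa_alloc (n : nat) (R : realType) (b : 'I_n -> R) (i : 'I_n) : R :=
  b i / (\sum_(j < n) b j + 1).

Definition mix_util (n : nat) (R : realType) (d : measure_display)
  (Omega : measurableType d) (P : probability Omega R)
  (v : 'I_n -> ('I_n -> R) -> R) (M : Omega -> dmech n R) (eps : R)
  (i : 'I_n) (b s : 'I_n -> R) : R :=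
  (1 - eps) * Rintegral P setT (fun w => util v (M w) i b s)
  + eps * (pa_alloc b i * v i s).

Definition mix_ESW (n : nat) (R : realType) (d : measure_display)
  (Omega : measurableType d) (P : probability Omega R)
  (v : 'I_n -> ('I_n -> R) -> R) (M : Omega -> dmech n R) (eps : R)
  (b s : 'I_n -> R) : R :=
  (1 - eps) * ESW P v M b s + eps * \sum_(i < n) pa_alloc b i * v i s.

Definition is_PNE_no_overbid (n : nat) (R : realType) (d : measure_display)
  (Omega : measurableType d) (P : probability Omega R)
  (S : 'I_n -> interval R) (v : 'I_n -> ('I_n -> R) -> R)
  (M : Omega -> dmech n R) (eps : R) (b s : 'I_n -> R) :=
  [/\ in_prof S b, (forall i, b i <= s i) &
      (forall i t, t \in S i -> t <= s i ->
         mix_util P v M eps i (upd b i t) s <= mix_util P v M eps i b s)].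

From HB Require Import structures.
From mathcomp Require Import all_boot all_order all_algebra.
From mathcomp Require Import all_classical all_reals all_analysis.
From mathcomp Require Import lra.
Set Implicit Arguments. Unset Strict Implicit.
Import Order.TTheory GRing.Theory Num.Theory.
Local Open Scope ring_scope.

(* Under no-overbidding every pure Nash equilibrium of M' is truthful: if
   b_i < s_i, raising the bid to s_i weakly increases bidder i's utility in
   every deterministic ex-post IC mechanism (its allocation is monotone and
   the payment increase is at most the allocation increase times v_i), and
   strictly increases her winning probability b_i / (sum_j b_j + 1) in the
   proportional allocation, which she values at v_i(s) > 0.  At the
   truthful profile M' keeps a (1 - eps) fraction of the welfare of M,
   which is at least OPT / alpha. *)

Section Profiles.
Variables (n : nat) (R : realType).
Implicit Types (b : 'I_n -> R) (i : 'I_n) (t : R).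

Lemma upd_eq b i t : upd b i t i = t.
Proof. by rewrite /upd eqxx. Qed.

Lemma upd_id b i : upd b i (b i) = b.
Proof. by apply/funext => j; rewrite /upd; case: eqP => [->|]. Qed.

Lemma upd_upd b i t t' : upd (upd b i t) i t' = upd b i t'.
Proof. by apply/funext => j; rewrite /upd; case: eqP. Qed.

Lemma in_prof_upd (S : 'I_n -> interval R) b i t :
  in_prof S b -> t \in S i -> in_prof S (upd b i t).
Proof. by move=> hb ht j; rewrite /upd; case: eqP => [->|]. Qed.

End Profiles.

Section Valuations.
Variables (n : nat) (R : realType) (S : 'I_n -> interval R)
  (v : 'I_n -> ('I_n -> R) -> R).
Hypothesis hv : valuations S v.

Lemma valuation_le i (x y : 'I_n -> R) :
  in_prof S x -> in_prof S y -> (forall j, x j <= y j) -> v i x <= v i y.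
Proof.
case: hv => _ v_upd _ hx hy hxy.
pose z k j := if (nat_of_ord j < k)%N then y j else x j.
have zP k : in_prof S (z k) by move=> j; rewrite /z; case: ifP.
have le_z k : v i x <= v i (z k).
  elim: k => [|k IH]; first by rewrite [z 0%N](_ : _ = x) //; exact/funext.
  case: (ltnP k n) => [hk|hnk].
    pose o := Ordinal hk.
    have -> : z k.+1 = upd (z k) o (y o).
      apply/funext => j; rewrite /z /upd ltnS leq_eqVlt -val_eqE /=.
      by case: (eqVneq (val j) k) => [jk|//]; congr y; exact: val_inj.
    by apply: le_trans IH _; apply: v_upd; rewrite // /z ltnn.
  rewrite [z k.+1](_ : _ = z k) //; apply/funext => j.
  by rewrite /z (leq_trans (ltn_ord j) hnk) (leq_trans (ltn_ord j) (leqW hnk)).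
by rewrite [y](_ : _ = z n) //; apply/funext => j; rewrite /z ltn_ord.
Qed.

Lemma valuation_gt0 i s t :
  in_prof S s -> t \in S i -> t < s i -> 0 < v i s.
Proof.
case: hv => v_ge0 _ v_upd_lt hs ht lt_ts.
have hs' := in_prof_upd hs ht.
have := v_upd_lt i _ (s i) hs' (hs i).
rewrite upd_eq upd_upd upd_id => /(_ lt_ts).
exact/le_lt_trans/v_ge0.
Qed.

End Valuations.

Section DeterministicMechanisms.
Variables (n : nat) (R : realType) (S : 'I_n -> interval R)
  (v : 'I_n -> ('I_n -> R) -> R).

Lemma alloc01 (D : dmech n R) i b : alloc D i b = 0 \/ alloc D i b = 1.
Proof. by rewrite /alloc; case: eqP; [right|left]. Qed.

Lemma expost_IC (D : dmech n R) i s t :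
  expost_ICIR S v D -> in_prof S s -> t \in S i ->
  util v D i (upd s i t) s <= util v D i s s.
Proof. by move=> hD hs ht; move: (hD s hs i t ht); rewrite ge_max => /andP[]. Qed.

Hypothesis hv : valuations S v.

Lemma util_raise_bid (D : dmech n R) i (b s : 'I_n -> R) :
  expost_ICIR S v D -> in_prof S b -> in_prof S s ->
  (forall j, b j <= s j) -> b i < s i ->
  util v D i b s <= util v D i (upd b i (s i)) s.
Proof.
move=> hD hb hs hbs lt_bs.
set b' := upd b i (s i).
have hb' : in_prof S b' by exact: in_prof_upd.
have IC_b' : util v D i b b' <= util v D i b' b'.
  by have := expost_IC hD hb' (hb i); rewrite /b' upd_upd upd_id.
have IC_b : util v D i b' b <= util v D i b b by exact: expost_IC.
have lt_vb : v i b < v i b'.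
  by case: hv => _ _ v_upd_lt; apply: v_upd_lt.
have le_vs : v i b' <= v i s.
  by apply: (valuation_le hv) => // j; rewrite /b' /upd; case: eqP => [->|].
(* IC at b and at b' makes the allocation monotone, and bounds the payment
   increase by the allocation increase times v_i(b') <= v_i(s). *)
move: IC_b' IC_b; rewrite /util.
by case: (alloc01 D i b) => ->; case: (alloc01 D i b') => ->; lra.
Qed.

End DeterministicMechanisms.

Lemma integrable_util (n : nat) (R : realType) (d : measure_display)
    (Omega : measurableType d) (P : probability Omega R)
    (v : 'I_n -> ('I_n -> R) -> R) (M : Omega -> dmech n R) i b s :
  measurable_fun setT (fun w => alloc (M w) i b) ->
  P.-integrable setT (fun w => (pay (M w) i b)%:E) ->
  P.-integrable setT (EFin \o (fun w => util v (M w) i b s)).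
Proof.
move=> halloc hpay.
have ialloc : P.-integrable setT (fun w => (alloc (M w) i b)%:E).
  apply: (le_integrable measurableT _ _ (finite_measure_integrable_cst P 1 measurableT)).
    exact/measurable_realfun.measurable_EFinP.
  by move=> w _ /=; rewrite lee_fin; case: (alloc01 (M w) i b) => ->;
    rewrite ?normr0 ?normr1.
have -> : EFin \o (fun w => util v (M w) i b s) =
    ((fun w => (v i s)%:E * (alloc (M w) i b)%:E) \- (fun w => (pay (M w) i b)%:E))%E.
  by apply/funext => w /=; rewrite /util -EFinM -EFinB mulrC.
exact/integrableB/hpay/integrableZl.
Qed.

Lemma pa_alloc_ge0 (n : nat) (R : realType) (b : 'I_n -> R) i :
  (forall j, 0 <= b j) -> 0 <= pa_alloc b i.
Proof.
move=> b_ge0; apply: divr_ge0 => //.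
by apply: addr_ge0 => //; apply: sumr_ge0.
Qed.

Lemma pa_alloc_upd_lt (n : nat) (R : realType) (b : 'I_n -> R) i t :
  (forall j, 0 <= b j) -> b i < t -> pa_alloc b i < pa_alloc (upd b i t) i.
Proof.
move=> b_ge0 lt_bt.
rewrite /pa_alloc upd_eq (bigD1 i) //= [in X in _ < X](bigD1 i) //= upd_eq.
under [X in _ < _ / (_ + X + _)]eq_bigr => j /negbTE ji do rewrite /upd ji.
set a := \sum_(j | j != i) b j.
have a_ge0 : 0 <= a by apply: sumr_ge0.
have pos_b : 0 < b i + a + 1 by have := b_ge0 i; lra.
have pos_t : 0 < t + a + 1 by have := b_ge0 i; lra.
rewrite ltr_pdivrMr // mulrAC ltr_pdivlMr //; nra.
Qed.

Section Mixture.
Variables (n : nat) (R : realType) (d : measure_display)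
  (Omega : measurableType d) (P : probability Omega R)
  (S : 'I_n -> interval R) (v : 'I_n -> ('I_n -> R) -> R)
  (M : Omega -> dmech n R) (eps : R).
Hypotheses (hS : signal_spaces S) (hv : valuations S v)
  (hM : universal_ICIR P S v M) (eps_gt0 : 0 < eps) (eps_lt1 : eps < 1).

Lemma mix_util_raise_bid i (b s : 'I_n -> R) :
  in_prof S b -> in_prof S s -> (forall j, b j <= s j) -> b i < s i ->
  mix_util P v M eps i b s < mix_util P v M eps i (upd b i (s i)) s.
Proof.
case: hM => hD halloc hpay hb hs hbs lt_bs.
have hb' := in_prof_upd hb (hs i).
have le_M : Rintegral P setT (fun w => util v (M w) i b s) <=
            Rintegral P setT (fun w => util v (M w) i (upd b i (s i)) s).
  apply: le_Rintegral => //.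
  - exact: integrable_util (halloc i _ hb) (hpay i _ hb).
  - exact: integrable_util (halloc i _ hb') (hpay i _ hb').
  - by move=> w _; apply: (util_raise_bid hv (hD w)).
have v_gt0 : 0 < v i s := valuation_gt0 hv hs (hb i) lt_bs.
have lt_pa : pa_alloc b i * v i s < pa_alloc (upd b i (s i)) i * v i s.
  by rewrite ltr_pM2r //; apply: pa_alloc_upd_lt => // j; exact: hS (hb j).
rewrite /mix_util; apply: ler_ltD; first by rewrite ler_wpM2l // subr_ge0 ltW.
by rewrite ltr_pM2l.
Qed.

Lemma PNE_no_overbid_truthful (b s : 'I_n -> R) :
  in_prof S s -> is_PNE_no_overbid P S v M eps b s -> b = s.
Proof.
move=> hs [hb hbs hNE]; apply/funext => i; apply/eqP.
rewrite eq_le hbs leNgt; apply/negP => lt_bs.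
have := hNE i (s i) (hs i) (lexx _).
by apply/negP; rewrite -ltNge; exact: mix_util_raise_bid.
Qed.

Lemma mix_ESW_truthful_ge s :
  in_prof S s -> (1 - eps) * ESW P v M s s <= mix_ESW P v M eps s s.
Proof.
case: hv => v_ge0 _ _ hs; rewrite /mix_ESW lerDl.
apply/mulr_ge0/sumr_ge0 => [|i _]; first exact: ltW.
by apply: mulr_ge0; [apply: pa_alloc_ge0 => j; exact: hS (hs j)|exact: v_ge0].
Qed.

End Mixture.

Theorem mainTheorem8 (n : nat) (R : realType) (d : measure_display)
  (Omega : measurableType d) (P : probability Omega R)
  (S : 'I_n -> interval R) (v : 'I_n -> ('I_n -> R) -> R)
  (M : Omega -> dmech n R) (alpha eps : R) :
  signal_spaces S -> valuations S v -> universal_ICIR P S v M ->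
  0 < alpha ->
  (forall s, in_prof S s -> OPT v s / alpha <= ESW P v M s s) ->
  0 < eps -> eps < 1 ->
  forall s b, in_prof S s -> is_PNE_no_overbid P S v M eps b s ->
  OPT v s <= alpha / (1 - eps) * mix_ESW P v M eps b s.
Proof.
move=> hS hv hM alpha_gt0 approx eps_gt0 eps_lt1 s b hs hNE.
rewrite (PNE_no_overbid_truthful hS hv hM eps_gt0 eps_lt1 hs hNE).
have le_mix := mix_ESW_truthful_ge P M hS hv eps_gt0 hs.
have le_OPT := approx s hs; rewrite ler_pdivrMr // in le_OPT.
have eps1_gt0 : 0 < 1 - eps by rewrite subr_gt0.
rewrite mulrAC ler_pdivlMr // mulrC.
apply: le_trans (ler_wpM2l (ltW eps1_gt0) le_OPT) _.
by rewrite mulrA mulrC; apply: ler_wpM2l => //; exact: ltW.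
Qed.
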